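(* Let $R$ be a ranking profile over $m$ candidates and $\rhd$ a ranking that is pair-priceable for $R$. Then $\rhd$ satisfies strong proportional justified representation (sPJR) for $R$, i.e., for every subprofile $S$ of $R$, $$\Big|A(\rhd)\cap\bigcup_{\succ\in\mathcal{R}:S(\succ)>0}A(\succ)\Big|\geq\Big\lfloor|S|\binom{m}{2}\Big\rfloor.$$
   Context: Let $C$ be a set of $m$ candidates. A ranking is a strict linear order over $C$; $\mathcal{R}$ denotes the set of all rankings over $C$. A ranking profile is a function $R:\mathcal{R}\to[0,1]$ with $\sum_\succ R(\succ)=1$; a subprofile of $R$ is $S:\mathcal{R}\to[0,1]$ with $S(\succ)\leq R(\succ)$ for all $\succ$, and $|S|=\sum_\succ S(\succ)$. For a ranking $\succ$, $A(\succ)=\{(x,y)\in C\times C: x\succ y\}$. For $x\in X\subseteq C$, $u(\succ,x,X)=|\{y\in X\setminus\{x\}:x\succ y\}|$. A ranking $\rhd=x_1,\dots,x_m$ is pair-priceable for $R$ if there is $\pi:\mathcal{R}\times A(\rhd)\to[0,1]$ such that (1) $\pi(\succ,(x_i,x_j))\leq u(\succ,x_i,\{x_i,x_j\})$ for all $\succ$ and $(x_i,x_j)\in A(\rhd)$; (2) $\sum_{(x_i,x_j)\in A(\rhd)}\pi(\succ,(x_i,x_j))\leq\binom{m}{2}R(\succ)$ for all $\succ$; (3) $\sum_\succ\pi(\succ,(x_i,x_j))\leq1$ for all $(x_i,x_j)\in A(\rhd)$; (4) $\sum_\succ\sum_{(x_i,x_j)\in A(\rhd)}\pi(\succ,(x_i,x_j))>\binom{m}{2}-1$.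 *)

From HB Require Import structures.
From mathcomp Require Import all_boot all_order all_algebra all_fingroup.
From mathcomp Require Import reals.
Set Implicit Arguments. Unset Strict Implicit. Unset Printing Implicit Defensive.
Import Order.TTheory GRing.Theory Num.Theory.
Local Open Scope ring_scope.

(* A ranking (strict linear order over C) is encoded
   as a permutation s : {perm 'I_m} giving the position of each candidate:
   x is ranked above y  iff  s x < s y.  This is a bijection between
   {perm 'I_m} and the strict linear orders on 'I_m. *)
Definition ranking (m : nat) := {perm 'I_m}.

Definition prefers (m : nat) (r : ranking m) (x y : 'I_m) : bool := (r x < r y)%N.

Definition Apairs (m : nat) (r : ranking m) : {set 'I_m * 'I_m} :=
  [set p | prefers r p.1 p.2].

Definition u (m : nat) (r : ranking m) (x : 'I_m) (X : {set 'I_m}) : nat :=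
  #|[set y in X | (y != x) && prefers r x y]|.

Definition is_profile (F : realType) (m : nat) (R : ranking m -> F) : Prop :=
  (forall r, 0 <= R r <= 1) /\ \sum_(r : ranking m) R r = 1.

Definition is_subprofile (F : realType) (m : nat) (R S : ranking m -> F) : Prop :=
  forall r, 0 <= S r <= 1 /\ S r <= R r.

Definition size_prof (F : realType) (m : nat) (S : ranking m -> F) : F :=
  \sum_(r : ranking m) S r.

Definition pair_priceable (F : realType) (m : nat) (R : ranking m -> F)
    (rho : ranking m) : Prop :=
  exists pi : ranking m -> 'I_m * 'I_m -> F,
    (forall r p, p \in Apairs rho -> 0 <= pi r p <= 1) /\
    (forall r p, p \in Apairs rho -> pi r p <= (u r p.1 [set p.1; p.2])%:R) /\
    (forall r, \sum_(p in Apairs rho) pi r p <= ('C(m, 2))%:R * R r) /\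
    (forall p, p \in Apairs rho -> \sum_(r : ranking m) pi r p <= 1) /\
    (('C(m, 2))%:R - 1 < \sum_(r : ranking m) \sum_(p in Apairs rho) pi r p).

Definition sPJR (F : realType) (m : nat) (R : ranking m -> F) (rho : ranking m) : Prop :=
  forall S : ranking m -> F, is_subprofile R S ->
    Num.floor (size_prof S * ('C(m, 2))%:R) <=
    (#|Apairs rho :&: \bigcup_(r : ranking m | 0 < S r) Apairs r|)%:Z.

From HB Require Import structures.
From mathcomp Require Import all_boot all_order all_algebra all_fingroup.
From mathcomp Require Import reals lra.
Set Implicit Arguments. Unset Strict Implicit. Unset Printing Implicit Defensive.
Import Order.TTheory GRing.Theory Num.Theory.
Local Open Scope ring_scope.

(* Write N = C(m,2), let S be a subprofile and U the union of the pair sets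
   A(r) of its supporters.  A voter may only pay for a pair it prefers, so a
   supporter of S pays nothing for pairs outside U, and its spending there is
   at most N(R r - S r) = 0; any other voter spends at most N R r = N(R r - S r)
   in total.  Each pair of A(rho) collects at most 1, so the pairs in U collect
   at most k = |A(rho) ∩ U|.  The total spending, which exceeds N - 1, is thus
   at most k + N(1 - |S|), i.e. |S| N < k + 1, which is the floor bound. *)

Lemma u_pair (m : nat) (r : ranking m) (x y : 'I_m) :
  u r x [set x; y] = prefers r x y.
Proof.
rewrite /u; case: (eqVneq y x) => [->|ney].
  rewrite setUid (_ : [set _ in _ | _] = set0) ?cards0 /prefers ?ltnn //.
  by apply/setP => z; rewrite !inE; case: eqP.
rewrite (_ : [set _ in _ | _] = if prefers r x y then [set y] else set0).
  by case: ifP; rewrite ?cards1 ?cards0.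
apply/setP => z; rewrite !inE; case: (eqVneq z x) => [->|nezx] /=.
  by case: ifP; rewrite ?inE // eq_sym (negbTE ney).
case: (eqVneq z y) => [->|nezy] /=; first by case: ifP; rewrite ?inE ?eqxx.
by case: ifP; rewrite ?inE ?(negbTE nezy).
Qed.

Section PairPricing.

Variables (F : realType) (m : nat) (R : ranking m -> F) (rho : ranking m).
Variable pi : ranking m -> 'I_m * 'I_m -> F.

Local Notation N := ('C(m, 2))%:R.
Local Notation Ar := (Apairs rho).

Hypothesis pi_ge0 : forall r p, p \in Ar -> 0 <= pi r p.
Hypothesis pi_le_u : forall r p, p \in Ar -> pi r p <= (u r p.1 [set p.1; p.2])%:R.
Hypothesis voter_budget : forall r, \sum_(p in Ar) pi r p <= N * R r.
Hypothesis pair_cap : forall p, p \in Ar -> \sum_(r : ranking m) pi r p <= 1.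

Lemma pi_unpreferred_eq0 r p :
  p \in Ar -> ~~ prefers r p.1 p.2 -> pi r p = 0.
Proof.
move=> pA npr; apply/eqP; rewrite eq_le pi_ge0 // andbT.
by have := pi_le_u r pA; rewrite u_pair (negbTE npr).
Qed.

Variable S : ranking m -> F.
Hypothesis S_sub : is_subprofile R S.

Local Notation U := (\bigcup_(r : ranking m | 0 < S r) Apairs r).

Lemma spent_outside_le r : \sum_(p in Ar | p \notin U) pi r p <= N * (R r - S r).
Proof.
have [/andP[S_ge0 _] S_le_R] : (0 <= S r <= 1) /\ S r <= R r := S_sub r.
have [Sr_le0 | Sr_gt0] := lerP (S r) 0.
  have -> : S r = 0 by apply/eqP; rewrite eq_le Sr_le0.
  rewrite subr0; apply: le_trans (voter_budget r).
  rewrite [X in _ <= X](bigID (fun p => p \in U)) /= lerDr.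
  by apply: sumr_ge0 => p /andP[pA _]; exact: pi_ge0.
rewrite big1 ?mulr_ge0 ?subr_ge0 // => p /andP[pA pU].
apply: pi_unpreferred_eq0 => //; apply: contra pU => pr.
by apply/bigcupP; exists r; rewrite ?inE.
Qed.

Lemma spent_inside_le :
  \sum_(r : ranking m) \sum_(p in Ar | p \in U) pi r p <= #|Ar :&: U|%:R.
Proof.
have -> : #|Ar :&: U|%:R = \sum_(p in Ar | p \in U) (1 : F).
  by rewrite -sumr_const; apply: eq_bigl => p; rewrite inE.
rewrite exchange_big /=.
by apply: ler_sum => p /andP[pA _]; exact: pair_cap.
Qed.

Lemma total_spent_le :
  \sum_(r : ranking m) R r = 1 ->
  \sum_(r : ranking m) \sum_(p in Ar) pi r p <= #|Ar :&: U|%:R + N * (1 - size_prof S).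
Proof.
move=> R_sum.
have -> : 1 - size_prof S = \sum_r (R r - S r) by rewrite sumrB R_sum.
rewrite mulr_sumr.
under eq_bigr do rewrite (bigID (fun p => p \in U)) /=.
rewrite big_split /=; apply: lerD; first exact: spent_inside_le.
by apply: ler_sum => r _; exact: spent_outside_le.
Qed.

End PairPricing.

Theorem mainTheorem9 (F : realType) (m : nat) (R : ranking m -> F) (rho : ranking m) :
  is_profile R -> pair_priceable R rho -> sPJR R rho.
Proof.
move=> [_ R_sum] [pi [pi01 [pi_le_u [budget [cap spent_gt]]]]] S S_sub.
have pi_ge0 r p (pA : p \in Apairs rho) : 0 <= pi r p by case/andP: (pi01 r p pA).
have := total_spent_le pi_ge0 pi_le_u budget cap S_sub R_sum.
set k := #|_ :&: _|; set N : F := ('C(m, 2))%:R => spent_le.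
have size_lt : size_prof S * N < k%:R + 1 by move: spent_gt spent_le; lra.
by rewrite -ltzD1 floor_lt_int intrD.
Qed.
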